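(* Let $d,N,m$ be positive integers with $m\ge d$ and $N\ge d$. Let $X\in\mathbb{R}^{d\times m}$ be a data matrix with $XX^T=I_d$ (whitened data). Consider the two-layer linear network $f(x)=W_2W_1x$ with $W_1\in\mathbb{R}^{N\times d}$, $W_2\in\mathbb{R}^{1\times N}$, whose initial weights satisfy $\|W_1^{(0)}\|_F=\|W_2^{(0)}\|_F=\sigma$ with $0<\sigma\ll 1$. Targets are $Y=\beta^TX$ with $\beta\in\mathbb{R}^d$ having i.i.d. entries $\beta_i\sim\mathcal{N}(0,1/d)$; write $\hat\beta=\beta/\|\beta\|$. Define the initial NTK $K^{(0)}=X^T\big(W_1^{(0)T}W_1^{(0)}+\|W_2^{(0)}\|^2 I_d\big)X$ and the final NTK (after training by gradient flow on the mean squared error) $K^{(f)}=\|\beta\|\,X^T(\hat\beta\hat\beta^T+I_d)X+O(\sigma^2)$. Then, neglecting additive $O(\sigma^2)$ terms, the expected kernel alignment $\mathbb{E}_\beta\big[\mathrm{KA}(K^{(f)},K^{(0)})\big]$, viewed as a function of $W_1^{(0)}$ over all $W_1^{(0)}$ with $\|W_1^{(0)}\|_F=\sigma$, is maximized by high-rank isotropic initializations, i.e. by $W_1^{(0)}$ whose $d$ singular values $s_1,\dots,s_d$ all have equal absolute value ($s_j^2=\sigma^2/d$ for all $j$).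
   Context: The kernel alignment of two $m\times m$ matrices is $\mathrm{KA}(K^{(f)},K^{(0)})=\dfrac{\operatorname{Tr}(K^{(f)}K^{(0)})}{\|K^{(f)}\|_F\,\|K^{(0)}\|_F}$. The expectation is over the random task vector $\beta$. The expression for $K^{(f)}$ is the asymptotic (infinite-training-time) neural tangent kernel of this network in the small-initialization regime, and is taken as given. *)

From HB Require Import structures.
From mathcomp Require Import all_boot all_order all_algebra.
From mathcomp Require Import all_classical all_reals all_analysis.
Set Implicit Arguments. Unset Strict Implicit. Unset Printing Implicit Defensive.
Import Order.TTheory GRing.Theory Num.Theory.
Local Open Scope classical_set_scope.
Local Open Scope ring_scope.

Section Defs.
Variable R : realType.

Definition frob (p q : nat) (A : 'M[R]_(p, q)) : R :=
  Num.sqrt (\sum_(i < p) \sum_(j < q) A i j ^+ 2).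

Definition KA (m : nat) (K1 K2 : 'M[R]_m) : R :=
  \tr (K1 *m K2) / (frob K1 * frob K2).

Definition K0 (d m N : nat) (X : 'M[R]_(d, m)) (W1 : 'M[R]_(N, d))
  (W2 : 'M[R]_(1, N)) : 'M[R]_m :=
  X^T *m (W1^T *m W1 + (frob W2 ^+ 2)%:M) *m X.

Definition bhat (d : nat) (b : 'cV[R]_d) : 'cV[R]_d := (frob b)^-1 *: b.

(* final NTK with the O(sigma^2) term neglected:
   Kf = ||beta|| X^T (bhat bhat^T + I_d) X *)
Definition Kf (d m : nat) (X : 'M[R]_(d, m)) (b : 'cV[R]_d) : 'M[R]_m :=
  frob b *: (X^T *m (bhat b *m (bhat b)^T + 1%:M) *m X).

Definition has_singular_values (N d : nat) (W : 'M[R]_(N, d)) (s : 'rV[R]_d) :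
  Prop :=
  (forall j, 0 <= s 0 j) /\
  exists (U : 'M[R]_(N, d)) (V : 'M[R]_d),
    U^T *m U = 1%:M /\ V^T *m V = 1%:M /\ W = U *m diag_mx s *m V^T.

Definition isotropic (N d : nat) (sigma : R) (W : 'M[R]_(N, d)) : Prop :=
  exists s : 'rV[R]_d, has_singular_values W s /\
    forall j, s 0 j ^+ 2 = sigma ^+ 2 / d%:R.

Section Prob.
Context (dT : measure_display) (Omega : measurableType dT)
  (P : probability Omega R).

Definition mutually_independent (d : nat) (beta : 'I_d -> {RV P >-> R}) : Prop :=
  forall B : 'I_d -> set R, (forall i, measurable (B i)) ->
    P (\bigcap_(i in [set: 'I_d]) (beta i @^-1` B i)) =
    (\big[*%E/1%E]_(i < d) P (beta i @^-1` B i))%E.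

Definition iid_gaussian (d : nat) (beta : 'I_d -> {RV P >-> R}) (v : R) : Prop :=
  mutually_independent beta /\
  forall i (A : set R), measurable A ->
    distribution P (beta i) A = normal_prob 0 (Num.sqrt v) A.

Definition betavec (d : nat) (beta : 'I_d -> {RV P >-> R}) (w : Omega) :
  'cV[R]_d := \col_i beta i w.

Definition expected_KA (d m N : nat) (beta : 'I_d -> {RV P >-> R})
  (X : 'M[R]_(d, m)) (W1 : 'M[R]_(N, d)) (W2 : 'M[R]_(1, N)) : \bar R :=
  (\int[P]_w (KA (Kf X (betavec beta w)) (K0 X W1 W2))%:E)%E.

End Prob.
End Defs.

From HB Require Import structures.
From mathcomp Require Import all_boot all_order all_algebra.
From mathcomp Require Import all_classical all_reals all_analysis.
From mathcomp Require Import ring lra perm.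
Import Order.TTheory GRing.Theory Num.Theory.
Import numFieldTopology.Exports numFieldNormedType.Exports.
Local Open Scope classical_set_scope.
Local Open Scope ring_scope.
Set Implicit Arguments. Unset Strict Implicit. Unset Printing Implicit Defensive.

(* Write C = W1^T W1 + |W2|^2 I, so that K0 = X^T C X.  As X X^T = I, the alignment
   depends on beta only through the projection P = bhat bhat^T, and linearly:
   since tr P = 1, KA(Kf, K0) = tr (P (C + tr(C) I)) / (sqrt(d+3) |C|_F).
   The law of beta is invariant under permutations and sign changes of its
   coordinates, which forces E[P] = e I for some e >= 0, hence
   E[KA] = e (d+1) tr C / (sqrt(d+3) |C|_F).
   The norm constraints fix tr C = sigma^2 + d |W2|^2, so the expected alignment is
   largest when |C|_F is smallest; among matrices of a given trace the scalar ones
   have the least Frobenius norm, and C is scalar when W1 is isotropic. *)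

Section Frobenius.
Variable R : realType.

Lemma frob_sqr p q (A : 'M[R]_(p, q)) : frob A ^+ 2 = \tr (A *m A^T).
Proof.
have -> : \tr (A *m A^T) = \sum_i \sum_j A i j ^+ 2.
  by apply: eq_bigr => i _; rewrite mxE; apply: eq_bigr => j _; rewrite mxE expr2.
by rewrite sqr_sqrtr // sumr_ge0 // => i _; rewrite sumr_ge0 // => j _; rewrite sqr_ge0.
Qed.

Lemma frobZ p q a (A : 'M[R]_(p, q)) : frob (a *: A) = `|a| * frob A.
Proof.
apply/eqP; rewrite -(@eqrXn2 _ 2) ?mulr_ge0 ?sqrtr_ge0 //.
by rewrite exprMn real_normK ?num_real // !frob_sqr linearZ -scalemxAl -scalemxAr
  scalerA mxtraceZ expr2.
Qed.

Lemma mxtrace_gram p q (A : 'M[R]_(p, q)) : \tr (A^T *m A) = frob A ^+ 2.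
Proof. by rewrite frob_sqr mxtrace_mulC. Qed.

Lemma frob_scalar_mx n a : frob (a%:M : 'M[R]_n) ^+ 2 = n%:R * a ^+ 2.
Proof. by rewrite frob_sqr tr_scalar_mx -scalar_mxM mxtrace_scalar mulr_natl expr2. Qed.

Lemma frob_scalar_mx_gt0 n a : (0 < n)%N -> a != 0 -> 0 < frob (a%:M : 'M[R]_n).
Proof.
move=> n_gt0 a0; have : frob (a%:M : 'M[R]_n) ^+ 2 != 0.
  by rewrite frob_scalar_mx mulf_neq0 ?sqrf_eq0 // pnatr_eq0 -lt0n.
by rewrite lt0r sqrtr_ge0 andbT; apply: contra => /eqP ->; rewrite expr0n.
Qed.

(* Pythagoras: |A|^2 = |A - aI|^2 + |aI|^2, as <A - aI, aI> = a (tr A - n a) = 0. *)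
Lemma frob_scalar_mx_le n a (A : 'M[R]_n) :
  \tr A = n%:R * a -> frob (a%:M : 'M[R]_n) <= frob A.
Proof.
move=> trA; rewrite -(@ler_pXn2r _ 2) ?nnegrE ?sqrtr_ge0 // frob_scalar_mx.
have := sqr_ge0 (frob (A - a%:M)); rewrite frob_sqr.
rewrite linearB /= tr_scalar_mx mulmxBl !mulmxBr mul_scalar_mx mul_mx_scalar.
rewrite -scalar_mxM !raddfB /= !mxtraceZ mxtrace_tr trA mxtrace_scalar -frob_sqr.
lra.
Qed.

Lemma mxtrace_conj_coisometry d m (X : 'M[R]_(d, m)) (B C : 'M[R]_d) :
  X *m X^T = 1%:M -> \tr ((X^T *m B *m X) *m (X^T *m C *m X)) = \tr (B *m C).
Proof.
move=> XX; rewrite -!mulmxA (mulmxA X) XX mul1mx mxtrace_mulC -!mulmxA XX.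
by rewrite mulmx1.
Qed.

Lemma frob_conj_coisometry d m (X : 'M[R]_(d, m)) (B : 'M[R]_d) :
  X *m X^T = 1%:M -> frob (X^T *m B *m X) = frob B.
Proof.
move=> XX; apply/eqP; rewrite -(@eqrXn2 _ 2) ?sqrtr_ge0 // !frob_sqr.
by rewrite !trmx_mul trmxK mulmxA mxtrace_conj_coisometry.
Qed.

End Frobenius.

Section LineProjection.
Variables (R : realType) (n : nat).
Implicit Type x : 'I_n -> R.

(* For [x = 0] this is the zero matrix, as [_ / 0 = 0]. *)
Definition line_proj x : 'M[R]_n := \matrix_(i, j) (x i * x j / \sum_k x k ^+ 2).

Lemma line_proj0 x : \sum_k x k ^+ 2 = 0 -> line_proj x = 0.
Proof. by move=> x0; apply/matrixP => i j; rewrite !mxE x0 invr0 mulr0. Qed.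

Lemma tr_line_proj x : (line_proj x)^T = line_proj x.
Proof. by apply/matrixP => i j; rewrite !mxE (mulrC (x j)). Qed.

Lemma mxtrace_line_proj x : \sum_k x k ^+ 2 != 0 -> \tr (line_proj x) = 1.
Proof.
move=> x0; rewrite /mxtrace -(divff x0) mulr_suml.
by apply: eq_bigr => i _; rewrite mxE expr2.
Qed.

Lemma line_proj_idem x : \sum_k x k ^+ 2 != 0 -> line_proj x *m line_proj x = line_proj x.
Proof.
move=> x0; apply/matrixP => i j; rewrite !mxE.
under eq_bigr do rewrite !mxE.
rewrite -[RHS]mulr1 -(divff x0) mulr_suml mulr_sumr.
by apply: eq_bigr => k _; rewrite expr2; field.
Qed.

Lemma frob_line_proj_add1 x :
  \sum_k x k ^+ 2 != 0 -> frob (line_proj x + 1%:M) = Num.sqrt (n%:R + 3).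
Proof.
move=> x0; apply/eqP; rewrite -(@eqrXn2 _ 2) ?sqrtr_ge0 //.
rewrite [X in _ == X]sqr_sqrtr ?addr_ge0 //.
rewrite frob_sqr linearD /= tr_line_proj trmx1 mulmxDl !mulmxDr.
rewrite line_proj_idem // mul1mx mulmx1 mulmx1 !mxtraceD mxtrace_line_proj // mxtrace1.
by apply/eqP; ring.
Qed.

Lemma line_proj_signed_perm x (s : 'I_n -> bool) (p : {perm 'I_n}) i j :
  line_proj (fun k => (-1) ^+ s k * x (p k)) i j =
  (-1) ^+ (s i (+) s j) * line_proj x (p i) (p j).
Proof.
rewrite !mxE mulr_signM -!mulrA; congr (_ * (_ * (_ * _^-1))).
rewrite [RHS](reindex_inj (@perm_inj _ p)) /=.
by apply: eq_bigr => k _; rewrite exprMn sqrr_sign mul1r.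
Qed.

End LineProjection.

Section KernelAlignment.
Variables (R : realType) (d m N : nat).

Definition ntk_core (W : 'M[R]_(N, d)) (W2 : 'M[R]_(1, N)) : 'M[R]_d :=
  W^T *m W + (frob W2 ^+ 2)%:M.

Lemma frob_col (b : 'cV[R]_d) : frob b = Num.sqrt (\sum_k b k 0 ^+ 2).
Proof. by congr Num.sqrt; apply: eq_bigr => i _; rewrite big_ord1. Qed.

Lemma bhat_outer (b : 'cV[R]_d) : bhat b *m (bhat b)^T = line_proj (fun k => b k 0).
Proof.
apply/matrixP => i j; rewrite !mxE big_ord1 /bhat !mxE frob_col.
rewrite mulrACA -invfM -expr2 sqr_sqrtr; first by rewrite mulrC.
by rewrite sumr_ge0 // => k _; rewrite sqr_ge0.
Qed.

Lemma KA_Kf_K0 (X : 'M[R]_(d, m)) (W : 'M[R]_(N, d)) (W2 : 'M[R]_(1, N))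
    (b : 'cV[R]_d) : X *m X^T = 1%:M ->
  KA (Kf X b) (K0 X W W2) =
  \tr (line_proj (fun k => b k 0) *m (ntk_core W W2 + (\tr (ntk_core W W2))%:M)) /
  (Num.sqrt (d%:R + 3) * frob (ntk_core W W2)).
Proof.
move=> XX; rewrite /KA /Kf (_ : K0 X W W2 = X^T *m ntk_core W W2 *m X) //.
rewrite bhat_outer; set x := fun k => b k 0; set C := ntk_core W W2; clearbody C.
rewrite frobZ !frob_conj_coisometry // -scalemxAl mxtraceZ mxtrace_conj_coisometry //.
rewrite ger0_norm ?sqrtr_ge0 //.
have [x0|x0] := eqVneq (\sum_k x k ^+ 2) 0.
  by rewrite line_proj0 // mul0mx mxtrace0 frob_col -/x x0 sqrtr0 !mul0r.
have b0 : frob b != 0.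
  by rewrite frob_col -/x gt_eqF // sqrtr_gt0 lt0r x0 sumr_ge0 // => k _; rewrite sqr_ge0.
rewrite frob_line_proj_add1 // mulmxDr mul_mx_scalar mxtraceD mxtraceZ.
rewrite mxtrace_line_proj // mulmxDl mul1mx mxtraceD mulr1.
by rewrite -[frob b * _ * frob C]mulrA invfM mulrCA -mulrA mulKf.
Qed.

End KernelAlignment.

Section RealVectors.
Variables (R : realType) (n : nat).

Definition rvec := 'I_n -> R.
HB.instance Definition _ := Choice.on rvec.
HB.instance Definition _ := isPointed.Build rvec (fun _ => 0).

Definition rect (B : 'I_n -> set R) : set rvec :=
  \bigcap_(i in [set: 'I_n]) ((fun x : rvec => x i) @^-1` B i).

Definition rects : set (set rvec) :=
  [set A | exists2 B : 'I_n -> set R, (forall i, measurable (B i)) & A = rect B].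

(* Real vectors with the sigma-algebra generated by measurable rectangles: these form
   a pi-system, so the law of a random vector is determined on rectangles. *)
Definition rvecT := g_sigma_algebraType rects.

Lemma measurable_rvec dT (T : measurableType dT) (f : 'I_n -> T -> R) :
  (forall k, measurable_fun setT (f k)) ->
  measurable_fun setT (fun t => (fun k => f k t) : rvecT).
Proof.
move=> mf; apply: (@measurability _ _ _ rvecT _ _ rects) => //.
move=> _ [A [B mB ->] <-]; rewrite setTI.
have -> : (fun t => (fun k => f k t) : rvecT) @^-1` rect B =
    \bigcap_(i in [set: 'I_n]) (f i @^-1` B i).
  by apply/seteqP; split => t /= H i _; exact: H.
apply: fin_bigcap_measurable; first exact: finite_finset.
by move=> i _; rewrite -[X in measurable X]setTI; exact: mf.
Qed.

Lemma measurable_coord k : measurable_fun setT (fun x : rvecT => x k).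
Proof.
move=> _ A mA; rewrite setTI; apply: sub_sigma_algebra.
exists (fun i => if i == k then A else setT); first by move=> i; case: ifP.
apply/seteqP; split => x /=; first by move=> Ax i _ /=; case: eqP => // ->.
by move=> /(_ k I) /=; rewrite eqxx.
Qed.

Lemma rects_setI : setI_closed rects.
Proof.
move=> _ _ [B mB ->] [C mC ->]; exists (fun i => B i `&` C i).
  by move=> i; exact: measurableI.
apply/seteqP; split => x /=; first by move=> [HB HC] i _; split; [exact: HB|exact: HC].
by move=> H; split => i _; have [] := H i I.
Qed.

Lemma rects_setT : rects setT.
Proof. by exists (fun _ => setT) => //; apply/seteqP; split. Qed.

End RealVectors.

Section LineProjectionMeasurable.
Variable R : realType.

Lemma measurable_inv : measurable_fun [set: R] (@GRing.inv R).
Proof.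
have c0 : closed [set 0 : R].
  exact: accessible_closed_set1 (hausdorff_accessible (@Rhausdorff R)) 0.
rewrite -(setUv [set 0]) setUC; apply/measurable_funU => //; first exact: measurableC.
split; last exact: measurable_fun_set1.
apply: measurable_realfun.open_continuous_measurable_fun; first exact: closed_openC.
by move=> x; rewrite inE => /eqP; exact: inv_continuous.
Qed.

Lemma measurable_line_proj n i j :
  measurable_fun setT (fun x : rvecT R n => line_proj x i j).
Proof.
rewrite (_ : (fun x => _) = fun x : rvecT R n => x i * x j / \sum_k x k ^+ 2); last first.
  by apply/funext => x; rewrite mxE.
apply: measurable_realfun.measurable_funM.
  by apply: measurable_realfun.measurable_funM; exact: measurable_coord.
apply: measurableT_comp measurable_inv _; apply: measurable_sum => k.
by apply: measurable_realfun.measurable_funX; exact: measurable_coord.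
Qed.

Lemma line_proj_le1 n (x : 'I_n -> R) i j : `|line_proj x i j| <= 1.
Proof.
rewrite mxE; have [x0|x0] := eqVneq (\sum_k x k ^+ 2) 0.
  by rewrite x0 invr0 mulr0 normr0.
have sq_le k : x k ^+ 2 <= \sum_k x k ^+ 2.
  by rewrite (bigD1 k) //= lerDl sumr_ge0 // => l _; rewrite sqr_ge0.
have x_gt0 : 0 < \sum_k x k ^+ 2 by rewrite lt0r x0 sumr_ge0 // => k _; rewrite sqr_ge0.
rewrite mulrC normrM normfV (gtr0_norm x_gt0) mulrC ler_pdivrMr // mul1r ler_norml.
move: (sq_le i) (sq_le j) => hi hj; apply/andP; split; nra.
Qed.

End LineProjectionMeasurable.

Section RectangleLaw.
Context (R : realType) (n : nat) (dT : measure_display) (Omega : measurableType dT)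
  (P : probability Omega R).

Lemma integrable_bounded_comp (phi : Omega -> rvecT R n) (h : rvecT R n -> R) M :
  measurable_fun setT phi -> measurable_fun setT h -> (forall x, `|h x| <= M) ->
  P.-integrable setT (EFin \o h \o phi).
Proof.
move=> mphi mh hM; apply: measurable_bounded_integrable => //.
- by move: (probability_setT P) => /= ->; rewrite ltry.
- exact: measurableT_comp.
- exists M; split; first exact: num_real.
  by move=> M' MM' x _; apply: le_trans (hM _) (ltW MM').
Qed.

Lemma integral_eq_of_rect_law (phi psi : Omega -> rvecT R n) (h : rvecT R n -> R) M :
  measurable_fun setT phi -> measurable_fun setT psi ->
  (forall B, (forall i, measurable (B i)) ->
     P (phi @^-1` rect B) = P (psi @^-1` rect B)) ->
  measurable_fun setT h -> (forall x, `|h x| <= M) ->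
  (\int[P]_w (h (phi w))%:E = \int[P]_w (h (psi w))%:E)%E.
Proof.
move=> mphi mpsi law mh hM.
have mEh := (measurable_realfun.measurable_EFinP _ _).2 mh.
have iphi := integrable_bounded_comp mphi mh hM.
have ipsi := integrable_bounded_comp mpsi mh hM.
rewrite -(preimage_setT phi) in iphi; rewrite -(preimage_setT psi) in ipsi.
transitivity (\int[pushforward P phi]_(y in setT) (EFin \o h) y)%E.
  by rewrite (integral_pushforward mphi mEh iphi) // preimage_setT.
transitivity (\int[pushforward P psi]_(y in setT) (EFin \o h) y)%E; last first.
  by rewrite (integral_pushforward mpsi mEh ipsi) // preimage_setT.
apply: eq_measure_integral => A mA _.
pose Phi : {mfun Omega >-> rvecT R n} := HB.pack phi (isMeasurableFun.Build _ _ _ _ _ mphi).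
pose Psi : {mfun Omega >-> rvecT R n} := HB.pack psi (isMeasurableFun.Build _ _ _ _ _ mpsi).
apply: (@measure_unique _ R (rvecT R n) (@rects R n) (fun _ => setT) erefl
  (@rects_setI R n) (fun _ => @rects_setT R n) _
  (distribution P Phi) (distribution P Psi)) => //.
- by apply/seteqP; split => x // _; exists 0%N.
- by move=> _ [B mB ->]; exact: law.
- by move=> k; move: (probability_setT (distribution P Phi)) => /= ->; rewrite ltry.
Qed.

End RectangleLaw.

Section SignedPermutationInvariance.
Context (R : realType) (n : nat) (dT : measure_display) (Omega : measurableType dT)
  (P : probability Omega R) (beta : 'I_n -> {RV P >-> R}) (mu : set R -> \bar R).
Hypothesis beta_indep : mutually_independent beta.
Hypothesis beta_law : forall i A, measurable A -> distribution P (beta i) A = mu A.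
Hypothesis mu_oppr : forall A : set R, measurable A -> mu (-%R @^-1` A) = mu A.

Definition signed_perm_rvec (s : 'I_n -> bool) (p : {perm 'I_n}) (w : Omega) :
  rvecT R n := fun k => (-1) ^+ s k * beta (p k) w.

Lemma measurable_signed_perm_rvec s p : measurable_fun setT (signed_perm_rvec s p).
Proof.
by apply: measurable_rvec => k; apply: measurable_realfun.measurable_funM.
Qed.

Lemma signed_perm_rvec_rect s p (B : 'I_n -> set R) : (forall i, measurable (B i)) ->
  P (signed_perm_rvec s p @^-1` rect B) = (\big[*%E/1%E]_(i < n) mu (B i))%E.
Proof.
move=> mB; pose C i := [set y | B (p^-1%g i) ((-1) ^+ s (p^-1%g i) * y)].
have mC i : measurable (C i).
  have /(_ measurableT _ (mB (p^-1%g i))) : measurable_fun setT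
      (fun y : R => (-1) ^+ s (p^-1%g i) * y) by apply: measurable_realfun.measurable_funM.
  by rewrite setTI.
have -> : signed_perm_rvec s p @^-1` rect B =
    \bigcap_(i in [set: 'I_n]) (beta i @^-1` C i).
  apply/seteqP; split => w /= H i _.
  - by have := H (p^-1%g i) I; rewrite /C /signed_perm_rvec /= permKV.
  - by have := H (p i) I; rewrite /C /signed_perm_rvec /= permK.
rewrite beta_indep // [RHS](reindex_inj (@perm_inj _ (p^-1%g))).
apply: eq_bigr => i _; rewrite -[P _]/(distribution P (beta i) (C i)) beta_law //.
rewrite /C; case: (s _); last by under eq_set do rewrite mul1r.
by rewrite -[RHS]mu_oppr //; congr (mu _); apply/funext => y /=; rewrite expr1 mulN1r.
Qed.

Lemma integral_signed_perm_rvec s p s' p' (h : rvecT R n -> R) M :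
  measurable_fun setT h -> (forall x, `|h x| <= M) ->
  (\int[P]_w (h (signed_perm_rvec s p w))%:E =
   \int[P]_w (h (signed_perm_rvec s' p' w))%:E)%E.
Proof.
apply: integral_eq_of_rect_law; try exact: measurable_signed_perm_rvec.
by move=> B mB; rewrite !signed_perm_rvec_rect.
Qed.

Lemma integrable_line_proj i j :
  P.-integrable setT (fun w => (line_proj (fun k => beta k w) i j)%:E).
Proof.
have mbeta : measurable_fun setT (fun w => (fun k => beta k w) : rvecT R n).
  by apply: measurable_rvec => k; exact: measurable_funPT.
by have := integrable_bounded_comp P mbeta (@measurable_line_proj R n i j)
  (fun x => line_proj_le1 x i j).
Qed.

Lemma integral_line_proj_signed_perm (s : 'I_n -> bool) (p : {perm 'I_n}) i j :
  (((-1) ^+ (s i (+) s j))%:E *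
     \int[P]_w (line_proj (fun k => beta k w) (p i) (p j))%:E =
   \int[P]_w (line_proj (fun k => beta k w) i j)%:E)%E.
Proof.
transitivity (\int[P]_w (line_proj (signed_perm_rvec s p w) i j)%:E)%E.
  rewrite -integralZl //; last exact: integrable_line_proj.
  by apply: eq_integral => w _; rewrite (line_proj_signed_perm (fun k => beta k w)) EFinM.
rewrite (integral_signed_perm_rvec s p (fun _ => false) 1%g
  (@measurable_line_proj R n i j) (fun x => line_proj_le1 x i j)).
apply: eq_integral => w _.
by rewrite (line_proj_signed_perm (fun k => beta k w)) !perm1 mul1r.
Qed.

Lemma integral_line_proj_offdiag i j : i != j ->
  (\int[P]_w (line_proj (fun k => beta k w) i j)%:E = 0)%E.
Proof.
move=> ij; have := integral_line_proj_signed_perm (fun k => k == i) 1%g i j.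
rewrite !perm1 eqxx eq_sym (negbTE ij) expr1.
have := integrable_fin_num measurableT (integrable_line_proj i j).
by case: (\int[P]_w _)%E => // r _; rewrite -EFinM mulN1r => -[r0]; congr EFin; lra.
Qed.

Lemma integral_line_proj_diag i j :
  (\int[P]_w (line_proj (fun k => beta k w) i i)%:E =
   \int[P]_w (line_proj (fun k => beta k w) j j)%:E)%E.
Proof.
have := integral_line_proj_signed_perm (fun _ => false) (tperm i j) i i.
by rewrite tpermL mul1e => <-.
Qed.

Lemma integral_mxtrace_line_proj : exists2 e : R, 0 <= e & forall G : 'M[R]_n,
  (\int[P]_w (\tr (line_proj (fun k => beta k w) *m G))%:E = (e * \tr G)%:E)%E.
Proof.
have [e e0 Ediag] : exists2 e : R, 0 <= e &
    forall i, (\int[P]_w (line_proj (fun k => beta k w) i i)%:E = e%:E)%E.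
  case: (pickP 'I_n) => [i0 _|none]; last by exists 0 => // i; have := none i.
  exists (fine (\int[P]_w (line_proj (fun k => beta k w) i0 i0)%:E)%E).
    apply: fine_ge0; apply: integral_ge0 => w _; rewrite lee_fin mxE.
    by rewrite mulr_ge0 ?invr_ge0 -?expr2 ?sqr_ge0 ?sumr_ge0 // => k _; rewrite sqr_ge0.
  move=> i; rewrite (integral_line_proj_diag i i0) fineK //.
  by have := integrable_fin_num measurableT (integrable_line_proj i0 i0).
have intG (G : 'M[R]_n) i j : P.-integrable setT
    (fun w => (G j i)%:E * (line_proj (fun k => beta k w) i j)%:E)%E.
  exact: integrableZl (integrable_line_proj i j).
exists e => // G.
transitivity (\int[P]_w (\sum_i \sum_j
    (G j i)%:E * (line_proj (fun k => beta k w) i j)%:E))%E.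
  apply: eq_integral => w _; rewrite /mxtrace -sumEFin; apply: eq_bigr => i _.
  by rewrite mxE -sumEFin; apply: eq_bigr => j _; rewrite mulrC EFinM.
rewrite (integral_sum measurableT); last first.
  by move=> i; apply: integrable_sum => // j _; exact: intG.
transitivity (\sum_i (G i i * e)%:E)%E.
  apply: eq_bigr => i _; rewrite (integral_sum measurableT); last exact: intG.
  rewrite (bigD1 i) //= big1 ?adde0.
    by rewrite integralZl ?Ediag // integrable_line_proj.
  move=> j ji; rewrite integralZl ?integral_line_proj_offdiag ?mule0 //.
    by rewrite eq_sym.
  exact: integrable_line_proj.
by rewrite sumEFin mulr_sumr /mxtrace; congr EFin; apply: eq_bigr => i _; rewrite mulrC.
Qed.

End SignedPermutationInvariance.

Lemma expected_KAE (R : realType) n (dT : measure_display) (Omega : measurableType dT)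
    (P : probability Omega R) (beta : 'I_n -> {RV P >-> R}) (mu : set R -> \bar R) :
  mutually_independent beta ->
  (forall i A, measurable A -> distribution P (beta i) A = mu A) ->
  (forall A : set R, measurable A -> mu (-%R @^-1` A) = mu A) ->
  exists2 e : R, 0 <= e & forall m N (X : 'M[R]_(n, m)) W (W2 : 'M[R]_(1, N)),
    X *m X^T = 1%:M ->
    expected_KA beta X W W2 = (e * (n%:R + 1) * \tr (ntk_core W W2) /
                               (Num.sqrt (n%:R + 3) * frob (ntk_core W W2)))%:E.
Proof.
move=> indep law sym; have [e e0 Etr] := integral_mxtrace_line_proj indep law sym.
exists e => // m N X W W2 XX; set C := ntk_core W W2.
set D := Num.sqrt (n%:R + 3) * frob C.
transitivity (\int[P]_w (\tr (line_proj (fun k => beta k w) *m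
                         (D^-1 *: (C + (\tr C)%:M))))%:E)%E.
  apply: eq_integral => w _; rewrite KA_Kf_K0 // -scalemxAr mxtraceZ mulrC.
  rewrite (_ : (fun k => betavec beta w k 0) = (fun k => beta k w)) //.
  by apply/funext => k; rewrite mxE.
rewrite Etr mxtraceZ mxtraceD mxtrace_scalar -mulr_natl; congr EFin; ring.
Qed.

Lemma normal_prob0_oppr (R : realType) (s : R) (A : set R) : s != 0 -> measurable A ->
  normal_prob 0 s (-%R @^-1` A) = normal_prob 0 s A.
Proof.
move=> s0 mA; rewrite /normal_prob.
have mopp : measurable_fun [set: measurableTypeR R] (-%R : R -> measurableTypeR R).
  exact: measurable_realfun.measurable_funN.
transitivity (\int[lebesgue_measure]_(x in (-%R) @^-1` A)
   (((fun y => (normal_pdf 0 s y)%:E) \o -%R) x))%E.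
  apply: eq_integral => x _ /=; congr EFin.
  by rewrite /normal_pdf (negbTE s0) /normal_fun !subr0 sqrrN.
rewrite -(ge0_integral_pushforward mopp lebesgue_measure mA) //.
- by apply: eq_measure_integral => B mB _; exact: lebesgue_measureN.
- apply/measurable_realfun.measurable_EFinP.
  exact: measurable_funS (measurable_normal_pdf 0 s).
- by move=> y _; rewrite lee_fin normal_pdf_ge0.
Qed.

Section Isotropic.
Variables (R : realType) (N d : nat) (sigma : R).

Lemma gram_isotropic (W : 'M[R]_(N, d)) :
  isotropic sigma W -> W^T *m W = (sigma ^+ 2 / d%:R)%:M.
Proof.
case=> s [[_ [U [V [UU [VV ->]]]]] hs].
have DD : diag_mx s *m diag_mx s = (sigma ^+ 2 / d%:R)%:M.
  apply/matrixP => i j; rewrite mul_diag_mx !mxE.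
  by case: eqVneq => [->|_]; rewrite ?mulr0n ?mulr0 // !mulr1n -expr2 hs.
rewrite !trmx_mul trmxK tr_diag_mx !mulmxA -(mulmxA _ _ U) UU mulmx1 -(mulmxA V) DD.
by rewrite mul_mx_scalar -scalemxAl mulmx1C ?scalemx1 //.
Qed.

Lemma mxtrace_ntk_core (W : 'M[R]_(N, d)) (W2 : 'M[R]_(1, N)) :
  \tr (ntk_core W W2) = frob W ^+ 2 + d%:R * frob W2 ^+ 2.
Proof. by rewrite mxtraceD mxtrace_gram mxtrace_scalar mulr_natl. Qed.

Lemma ntk_core_isotropic (W : 'M[R]_(N, d)) (W2 : 'M[R]_(1, N)) :
  isotropic sigma W -> ntk_core W W2 = (sigma ^+ 2 / d%:R + frob W2 ^+ 2)%:M.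
Proof. by move=> iso; rewrite /ntk_core (gram_isotropic iso) -raddfD. Qed.

Lemma frob_ntk_core_isotropic_le (W Wiso : 'M[R]_(N, d)) (W2 : 'M[R]_(1, N)) :
  (0 < d)%N -> frob W = sigma -> isotropic sigma Wiso ->
  frob (ntk_core Wiso W2) <= frob (ntk_core W W2).
Proof.
move=> d_gt0 fW iso; rewrite (ntk_core_isotropic _ iso); apply: frob_scalar_mx_le.
by rewrite mxtrace_ntk_core fW mulrDr [d%:R * (_ / _)]mulrC divfK // pnatr_eq0 -lt0n.
Qed.

Lemma frob_ntk_core_isotropic_gt0 (W : 'M[R]_(N, d)) (W2 : 'M[R]_(1, N)) :
  (0 < d)%N -> 0 < sigma -> isotropic sigma W -> 0 < frob (ntk_core W W2).
Proof.
move=> d_gt0 sigma_gt0 iso.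
rewrite (ntk_core_isotropic _ iso) frob_scalar_mx_gt0 // gt_eqF // ltr_wpDr ?sqr_ge0 //.
by rewrite divr_gt0 ?exprn_gt0 ?ltr0n.
Qed.

End Isotropic.

Theorem theorem1 (R : realType) (d N m : nat)
  (dT : measure_display) (Omega : measurableType dT) (P : probability Omega R)
  (beta : 'I_d -> {RV P >-> R}) (X : 'M[R]_(d, m)) (sigma : R)
  (W2 : 'M[R]_(1, N)) :
  (0 < d)%N -> (0 < N)%N -> (0 < m)%N -> (d <= m)%N -> (d <= N)%N ->
  X *m X^T = 1%:M ->
  iid_gaussian beta (d%:R)^-1 ->
  0 < sigma ->
  frob W2 = sigma ->
  forall W1 W1iso : 'M[R]_(N, d),
    frob W1 = sigma -> frob W1iso = sigma -> isotropic sigma W1iso ->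
    (expected_KA beta X W1 W2 <= expected_KA beta X W1iso W2)%E.
Proof.
move=> d_gt0 _ _ _ _ XX [indep law] sigma_gt0 _ W1 Wiso fW1 fWiso iso.
have s_neq0 : Num.sqrt (d%:R^-1) != 0 :> R by rewrite gt_eqF // sqrtr_gt0 invr_gt0 ltr0n.
have [e e_ge0 EKA] := expected_KAE indep law (fun A => @normal_prob0_oppr R _ A s_neq0).
have tr_eq : \tr (ntk_core W1 W2) = \tr (ntk_core Wiso W2).
  by rewrite !mxtrace_ntk_core fW1 fWiso.
have tr_ge0 : 0 <= \tr (ntk_core Wiso W2).
  by rewrite mxtrace_ntk_core addr_ge0 ?sqr_ge0 // mulr_ge0 ?sqr_ge0.
have frob_gt0 := frob_ntk_core_isotropic_gt0 W2 d_gt0 sigma_gt0 iso.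
have frob_le := frob_ntk_core_isotropic_le W2 d_gt0 fW1 iso.
have sqrt_gt0 : 0 < Num.sqrt (d%:R + 3) :> R by rewrite sqrtr_gt0 addr_gt0 ?ltr0n.
rewrite !EKA // lee_fin tr_eq ler_wpM2l ?mulr_ge0 ?addr_ge0 //.
by rewrite lef_pV2 ?posrE ?mulr_gt0 ?ler_pM2l //; exact: lt_le_trans frob_le.
Qed.
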